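(* Let $\gamma$ be a gauge on $\mathbb{R}^d$ with skewness $\sigma$ and $(D,w)$ a finite positively weighted set with total weight $w_D$. If $a\in\mathrm{CL}_\gamma(D,w)$, then $\mathrm{FW}_\gamma\big((D,w)+(a,w_D/\sigma)\big)=\{a\}$.
   Context: A gauge $\gamma$ on $\mathbb{R}^d$ is the Minkowski functional of a convex compact set $B_\gamma$ with the origin in its interior (not necessarily symmetric); its skewness is $\sigma=\sup_{x\ne0}\gamma(x)/\gamma(-x)$. $\mathrm{FW}_\gamma(S,u)$ is the set of minimizers of $x\mapsto\sum_{s\in S}u_s\gamma(x-s)$. $(D,w)+(C,v)$ denotes $D\cup C$ with weights added at common points; $(a,t)$ denotes the single point $a$ with weight $t$. The contamination locus is $\mathrm{CL}_\gamma(D,w)=\bigcup\mathrm{FW}_\gamma((D,w)+(C,v))$, the union over all nonempty finite positively weighted sets $(C,v)$ with $\sigma v_C<w_D$. *)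

From HB Require Import structures.
From mathcomp Require Import all_boot all_order all_algebra.
From mathcomp Require Import finmap.
From mathcomp Require Import all_classical all_reals all_analysis.
Set Implicit Arguments. Unset Strict Implicit. Unset Printing Implicit Defensive.
Import Order.TTheory GRing.Theory Num.Theory.
Import numFieldNormedType.Exports.
Local Open Scope classical_set_scope.
Local Open Scope ring_scope.

Section Gauge.
Variables (R : realType) (d : nat).
Notation V := 'rV[R]_d.

Definition convex_set_rV (B : set V) : Prop :=
  forall x y (t : R), B x -> B y -> 0 <= t <= 1 -> B (t *: x + (1 - t) *: y).

Definition gauge_body (B : set V) : Prop :=
  [/\ convex_set_rV B, compact B & (interior B) 0].

Definition minkowski_gauge (B : set V) (x : V) : R :=
  inf [set t : R | 0 < t /\ B (t^-1 *: x)].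

Definition skewness (g : V -> R) : R :=
  sup [set g x / g (- x) | x in [set x : V | x != 0]].

(* a finite weighted set is a pair (D, w), D : {fset V}, w : V -> R;
   it is positively weighted when w > 0 on D *)
Definition pos_weighted (D : {fset V}) (w : V -> R) : Prop :=
  forall x, x \in D -> 0 < w x.

Definition total_weight (D : {fset V}) (w : V -> R) : R :=
  \sum_(s <- D) w s.

Definition wsum_set (D C : {fset V}) : {fset V} := fsetU D C.
Definition wsum_weight (D : {fset V}) (w : V -> R) (C : {fset V}) (v : V -> R)
  : V -> R :=
  fun x => (if x \in D then w x else 0) + (if x \in C then v x else 0).

Definition FW (g : V -> R) (S : {fset V}) (u : V -> R) : set V :=
  [set x | forall y, \sum_(s <- S) u s * g (x - s) <= \sum_(s <- S) u s * g (y - s)].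

Definition CL (g : V -> R) (D : {fset V}) (w : V -> R) : set V :=
  [set x | exists (C : {fset V}) (v : V -> R),
     [/\ C != fset0, pos_weighted C v,
         skewness g * total_weight C v < total_weight D w &
         FW g (wsum_set D C) (wsum_weight D w C v) x]].

End Gauge.

(* Write [g] for the Minkowski gauge of the body [B] and
   [wcost g S u y = \sum_(s in S) u s * g (y - s)].  Let [a] minimize the
   cost of [(D,w) + (C,v)] with [sigma * v_C < w_D].  Subadditivity of [g]
   gives [wcost C v y <= v_C * g (y - a) + wcost C v a], hence
     [wcost D w a <= wcost D w y + v_C * g (y - a)]   for every [y].
   Since [sigma > 0] we have [v_C < t := w_D / sigma], and [g] vanishes only
   at [0]; so [a] is the strict unique minimizer of
   [wcost D w + t * g (. - a)], which is the cost of [(D,w) + (a,t)]. *)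
From HB Require Import structures.
From mathcomp Require Import all_boot all_order all_algebra.
From mathcomp Require Import finmap.
From mathcomp Require Import all_classical all_reals all_analysis.
From mathcomp Require Import ring lra.
Import Order.TTheory GRing.Theory Num.Theory.
Import numFieldNormedType.Exports.
Local Open Scope classical_set_scope.
Local Open Scope ring_scope.
Set Implicit Arguments. Unset Strict Implicit.

Section MinkowskiGauge.
Variables (R : realType) (d : nat) (B : set 'rV[R]_d).
Hypothesis gB : gauge_body B.

Local Notation g := (minkowski_gauge B).

Let scalings (x : 'rV[R]_d) := [set t : R | 0 < t /\ B (t^-1 *: x)].

Lemma gauge_body_ball : exists2 r : R, 0 < r & forall x, `|x| < r -> B x.
Proof.
case: gB => _ _ /nbhs_ballP [r r0 Br]; exists r => // x xr.
by apply: Br; rewrite -ball_normE /= sub0r normrN.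
Qed.

Lemma gauge_body_bounded : exists2 M : R, 0 < M & forall x, B x -> `|x| <= M.
Proof.
case: gB => _ /compact_bounded [M [_ HM]].
exists (`|M| + 1); first by rewrite ltr_wpDl.
by move=> x Bx; apply: HM => //; rewrite (le_lt_trans (ler_norm M)) // ltrDl.
Qed.

Lemma scalings_neq0 x : scalings x !=set0.
Proof.
have [r r0 Br] := gauge_body_ball.
have nx1 : 0 < `|x| + 1 by rewrite ltr_wpDl.
exists ((`|x| + 1) / r); split; first by rewrite divr_gt0.
apply: Br; rewrite normrZ invfM invrK ger0_norm ?mulr_ge0 ?invr_ge0 ?ltW //.
by rewrite mulrAC gtr_pMl // mulrC ltr_pdivrMr // mul1r ltrDl.
Qed.

Lemma scalings_lbound x : has_lbound (scalings x).
Proof. by exists 0 => t [/ltW]. Qed.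

Lemma gauge_ge0 x : 0 <= g x.
Proof. by apply: lb_le_inf; [exact: scalings_neq0 | move=> t [/ltW]]. Qed.

Lemma gauge_le x t : 0 < t -> B (t^-1 *: x) -> g x <= t.
Proof. by move=> t0 Bt; apply: (ge_inf (scalings_lbound x)). Qed.

Lemma gauge_ge_norm : exists2 M : R, 0 < M & forall x, `|x| / M <= g x.
Proof.
have [M M0 HM] := gauge_body_bounded; exists M => // x.
apply: lb_le_inf; first exact: scalings_neq0.
move=> t [t0 /HM]; rewrite normrZ ger0_norm; last by rewrite invr_ge0 ltW.
by rewrite ler_pdivrMr // -ler_pdivrMl.
Qed.

Lemma gauge_le_norm : exists2 K : R, 0 < K & forall x, x != 0 -> g x <= `|x| * K.
Proof.
have [r r0 Br] := gauge_body_ball; exists (2 / r); first by rewrite divr_gt0.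
move=> x x0; have nx : 0 < `|x| by rewrite normr_gt0.
apply: gauge_le; first by rewrite mulr_gt0 // divr_gt0.
apply: Br; rewrite normrZ ger0_norm; last by rewrite invr_ge0 ltW // mulr_gt0 // divr_gt0.
rewrite invfM mulrC mulrA mulfV ?gt_eqF // mul1r invf_div.
by rewrite ltr_pdivrMr // ltr_pMr // ltr1n.
Qed.

Lemma gauge_gt0 x : x != 0 -> 0 < g x.
Proof.
move=> x0; have [M M0 HM] := gauge_ge_norm.
by apply: lt_le_trans (HM x); rewrite divr_gt0 // normr_gt0.
Qed.

(* [0] lies in [B], so every positive [t] is an admissible scaling of [0]. *)
Lemma gauge0 : g 0 = 0.
Proof.
have [r r0 Br] := gauge_body_ball; have B0 : B 0 by apply: Br; rewrite normr0.
apply/eqP; rewrite eq_le gauge_ge0 andbT leNgt; apply/negP => g0_gt0.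
have : g 0 <= g 0 / 2 by apply: gauge_le; rewrite ?divr_gt0 ?scaler0.
lra.
Qed.

(* Convexity of [B] makes the gauge subadditive: if [x / s] and [y / t] lie
   in [B], so does their convex combination [(x + y) / (s + t)]. *)
Lemma gauge_subadditive x y : g (x + y) <= g x + g y.
Proof.
have sum_scalings s t : scalings x s -> scalings y t -> g (x + y) <= s + t.
  move=> [s0 Bs] [t0 Bt]; have st0 : 0 < s + t by rewrite addr_gt0.
  apply: gauge_le => //; case: gB => convB _ _.
  have -> : (s + t)^-1 *: (x + y) =
      (s / (s + t)) *: (s^-1 *: x) + (1 - s / (s + t)) *: (t^-1 *: y).
    rewrite !scalerA scalerDr; congr (_ *: _ + _ *: _);
      by field; rewrite !gt_eqF.
  apply: convB => //; apply/andP; split; first by rewrite divr_ge0 // ltW.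
  by rewrite ler_pdivrMr // mul1r lerDl ltW.
have le_t t : scalings y t -> g (x + y) - t <= g x.
  move=> yt; apply: lb_le_inf; first exact: scalings_neq0.
  by move=> s xs; have := sum_scalings s t xs yt; lra.
suff : g (x + y) - g x <= g y by lra.
apply: lb_le_inf; first exact: scalings_neq0.
by move=> t yt; have := le_t t yt; lra.
Qed.

(* In a nontrivial space the skewness is positive: the ratios
   [g x / g (- x)] are positive and bounded by the norm comparisons. *)
Lemma skewness_gt0 (z : 'rV[R]_d) : z != 0 -> 0 < skewness g.
Proof.
move=> z0; have [K K0 HK] := gauge_le_norm; have [M M0 HM] := gauge_ge_norm.
have ratios_ub : has_ubound [set g x / g (- x) | x in [set x | x != 0]].
  exists (K * M) => _ [x /= x0 <-].
  have gNx : 0 < g (- x) by apply: gauge_gt0; rewrite oppr_eq0.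
  rewrite ler_pdivrMr //; have := HM (- x); rewrite normrN ler_pdivrMr // => h.
  by have := HK x x0; have := normr_ge0 x; nra.
apply: lt_le_trans (ub_le_sup ratios_ub _); last by exists z.
by rewrite divr_gt0 // gauge_gt0 // oppr_eq0.
Qed.

End MinkowskiGauge.

Section WeightedCost.
Variables (R : realType) (d : nat).
Local Notation V := 'rV[R]_d.

Definition wcost (g : V -> R) (S : {fset V}) (u : V -> R) (y : V) : R :=
  \sum_(s <- S) u s * g (y - s).

Lemma wcost_wsum g D C w v y :
  wcost g (wsum_set D C) (wsum_weight D w C v) y = wcost g D w y + wcost g C v y.
Proof.
have restrict (A A' : {fset V}) (u : V -> R) :
    \sum_(s <- (A `|` A')%fset) (if s \in A then u s else 0) * g (y - s) =
    wcost g A u y.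
  rewrite -(big_fset_incl _ (fsubsetUl A A')); last first.
    by move=> x _ /negbTE ->; rewrite mul0r.
  by rewrite big_seq [RHS]big_seq; apply: eq_bigr => x ->.
rewrite /wcost /wsum_set /wsum_weight; under eq_bigr do rewrite mulrDl.
by rewrite big_split /= restrict fsetUC restrict.
Qed.

Lemma wcost_shift_le (g : V -> R) C v a y :
  (forall x z, g (x + z) <= g x + g z) -> (forall c, c \in C -> 0 <= v c) ->
  wcost g C v y <= total_weight C v * g (y - a) + wcost g C v a.
Proof.
move=> subg v_ge0; rewrite /wcost /total_weight big_distrl -big_split /=.
rewrite big_seq [X in _ <= X]big_seq; apply: ler_sum => c cC.
rewrite -mulrDr ler_wpM2l ?v_ge0 //.
have -> : y - c = (y - a) + (a - c) by rewrite addrA subrK.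
exact: subg.
Qed.

Lemma FW_wsum_penalty (g : V -> R) D w C v a y :
  (forall x z, g (x + z) <= g x + g z) -> (forall c, c \in C -> 0 <= v c) ->
  FW g (wsum_set D C) (wsum_weight D w C v) a ->
  wcost g D w a <= wcost g D w y + total_weight C v * g (y - a).
Proof.
move=> subg v_ge0 /(_ y); rewrite -!/(wcost _ _ _ _) !wcost_wsum.
by have := wcost_shift_le a y subg v_ge0; lra.
Qed.

Lemma FW_wsum_point (g : V -> R) D w a t :
  FW g (wsum_set D [fset a]%fset) (wsum_weight D w [fset a]%fset (fun=> t)) =
  [set x | forall y, wcost g D w x + t * g (x - a) <= wcost g D w y + t * g (y - a)].
Proof.
by apply/seteqP; split => x /= + y => /(_ y);
  rewrite -!/(wcost _ _ _ _) !wcost_wsum /wcost !big_seq_fset1.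
Qed.

End WeightedCost.

Lemma penalized_argmin_unique (R : realDomainType) (T : Type)
    (f h : T -> R) (t : R) (a : T) :
  h a = 0 -> (forall y, y <> a -> f a < f y + t * h y) ->
  [set x | forall y, f x + t * h x <= f y + t * h y] = [set a].
Proof.
move=> ha0 a_strict; apply/seteqP; split => x /=.
  move=> x_min; apply/not_notP => xa.
  by have := x_min a; have := a_strict x xa; rewrite ha0 mulr0 addr0; lra.
move=> -> y; rewrite ha0 mulr0 addr0.
have [-> | ya] := pselect (y = a); first by rewrite ha0 mulr0 addr0.
exact/ltW/a_strict.
Qed.

Theorem mainTheorem20 (R : realType) (d : nat) (B : set 'rV[R]_d)
  (D : {fset 'rV[R]_d}) (w : 'rV[R]_d -> R) (a : 'rV[R]_d) :
  gauge_body B ->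
  pos_weighted D w ->
  CL (minkowski_gauge B) D w a ->
  FW (minkowski_gauge B) (wsum_set D [fset a]%fset)
     (wsum_weight D w [fset a]%fset
        (fun _ => total_weight D w / skewness (minkowski_gauge B)))
  = [set a].
Proof.
move=> gB _ [C [v [_ v_gt0 skew_vC a_min]]].
set t := total_weight D w / skewness (minkowski_gauge B).
have v_ge0 c : c \in C -> 0 <= v c by move/v_gt0/ltW.
have penalty := FW_wsum_penalty _ (gauge_subadditive gB) v_ge0 a_min.
rewrite FW_wsum_point; apply: penalized_argmin_unique; first by rewrite subrr gauge0.
move=> y /eqP; rewrite -subr_eq0 => ya.
have vC_lt_t : total_weight C v < t.
  by rewrite /t ltr_pdivlMr ?(skewness_gt0 gB ya) // mulrC; exact: skew_vC.
apply: le_lt_trans (penalty y) _.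
by rewrite ltrD2l ltr_pM2r // gauge_gt0.
Qed.
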